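(* For every $k\ge1$ and every $g\in G_k$, we have $g^2\in G_k'$.
   Context: Let $C_2=\{e,\sigma\}$ with $\sigma=(1,2)$. Define $B_1=C_2$ and $B_k=B_{k-1}\wr C_2$ for $k>1$, with elements written as wreath recursions $(g_1,g_2)\pi$, $g_1,g_2\in B_{k-1}$, $\pi\in C_2$, and multiplication $(g_1,g_2)\pi\cdot(h_1,h_2)\rho=(g_1h_{\pi(1)},g_2h_{\pi(2)})\pi\rho$. Define $G_1=\{e\}$ and, for $k>1$, $G_k=\{(g_1,g_2)\pi\in B_k : g_1g_2\in G_{k-1}\}$. *)

(* B n represents B_{n+1}: B_1 = C_2 (bool, true = sigma = (1 2)),
   B_{k} = B_{k-1} wr C_2, elements ((g1, g2), pi). *)
Fixpoint B (n : nat) : Type :=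
  match n with
  | 0 => bool
  | S m => (B m * B m * bool)%type
  end.

Fixpoint one (n : nat) : B n :=
  match n return B n with
  | 0 => false
  | S m => (one m, one m, false)
  end.

(* (g1,g2)pi * (h1,h2)rho = (g1 h_{pi(1)}, g2 h_{pi(2)}) pi rho *)
Fixpoint mul (n : nat) : B n -> B n -> B n :=
  match n return B n -> B n -> B n with
  | 0 => fun a b => xorb a b
  | S m => fun g h =>
      match g, h with
      | (g1, g2, p), (h1, h2, r) =>
          if p then (mul m g1 h2, mul m g2 h1, xorb p r)
          else (mul m g1 h1, mul m g2 h2, xorb p r)
      end
  end.

Fixpoint inv (n : nat) : B n -> B n :=
  match n return B n -> B n with
  | 0 => fun a => a
  | S m => fun g =>
      match g with
      | (g1, g2, p) =>
          if p then (inv m g2, inv m g1, p) else (inv m g1, inv m g2, p)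
      end
  end.

Definition comm (n : nat) (a b : B n) : B n :=
  mul n (inv n a) (mul n (inv n b) (mul n a b)).

(* inG n g  <->  g belongs to G_{n+1}:  G_1 = {e},
   G_k = {(g1,g2)pi in B_k | g1 g2 in G_{k-1}} *)
Fixpoint inG (n : nat) : B n -> Prop :=
  match n return B n -> Prop with
  | 0 => fun g => g = false
  | S m => fun g => match g with (g1, g2, _) => inG m (mul m g1 g2) end
  end.

(* The subgroup generated by commutators [a,b] with P a, P b:
   all finite products of such commutators and their inverses. *)
Inductive derived (n : nat) (P : B n -> Prop) : B n -> Prop :=
| der_one : derived n P (one n)
| der_comm : forall a b y, P a -> P b -> derived n P y ->
    derived n P (mul n (comm n a b) y)
| der_invcomm : forall a b y, P a -> P b -> derived n P y ->
    derived n P (mul n (inv n (comm n a b)) y).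

From Stdlib Require Import Bool Setoid.

(* G_k is the kernel of the parity map B_k -> C_2 that xors all bottom-level
   labels.  The square of g = (g1, g2)pi
   is a base element (s, t), which factors as (s, s^-1) * (1, s t).  The first
   factor is the commutator [(1, s), sigma], and s t is (g1 g2)^2 times a
   commutator [u, v] of B_k.  By induction (1, (g1 g2)^2) lies in G_{k+1}', and
   (1, [u, v]) = [(p, u), (q, v)] for commuting p, q with the parities of u, v. *)

Lemma mul_assoc n (x y z : B n) : mul n (mul n x y) z = mul n x (mul n y z).
Proof.
  induction n as [|m IH].
  - destruct x, y, z; reflexivity.
  - destruct x as [[x1 x2] []], y as [[y1 y2] []], z as [[z1 z2] []];
      simpl; rewrite ?IH; reflexivity.
Qed.

Lemma mul_1_l n (x : B n) : mul n (one n) x = x.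
Proof.
  induction n as [|m IH]; [reflexivity|].
  destruct x as [[x1 x2] p]; simpl; rewrite !IH; reflexivity.
Qed.

Lemma mul_1_r n (x : B n) : mul n x (one n) = x.
Proof.
  induction n as [|m IH]; [destruct x; reflexivity|].
  destruct x as [[x1 x2] []]; simpl; rewrite !IH; reflexivity.
Qed.

Lemma mul_inv_l n (x : B n) : mul n (inv n x) x = one n.
Proof.
  induction n as [|m IH]; [destruct x; reflexivity|].
  destruct x as [[x1 x2] []]; simpl; rewrite !IH; reflexivity.
Qed.

Lemma mul_inv_r n (x : B n) : mul n x (inv n x) = one n.
Proof.
  induction n as [|m IH]; [destruct x; reflexivity|].
  destruct x as [[x1 x2] []]; simpl; rewrite !IH; reflexivity.
Qed.

Lemma inv_one n : inv n (one n) = one n.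
Proof. induction n as [|m IH]; simpl; rewrite ?IH; reflexivity. Qed.

Lemma inv_inv n (x : B n) : inv n (inv n x) = x.
Proof.
  induction n as [|m IH]; [reflexivity|].
  destruct x as [[x1 x2] []]; simpl; rewrite !IH; reflexivity.
Qed.

Lemma inv_mul n (x y : B n) : inv n (mul n x y) = mul n (inv n y) (inv n x).
Proof.
  induction n as [|m IH]; [destruct x, y; reflexivity|].
  destruct x as [[x1 x2] []], y as [[y1 y2] []]; simpl; rewrite !IH; reflexivity.
Qed.

Lemma mul_K n (x y : B n) : mul n x (mul n (inv n x) y) = y.
Proof. rewrite <- mul_assoc, mul_inv_r, mul_1_l; reflexivity. Qed.

Lemma mul_VK n (x y : B n) : mul n (inv n x) (mul n x y) = y.
Proof. rewrite <- mul_assoc, mul_inv_l, mul_1_l; reflexivity. Qed.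

Lemma inv_unique n (x y : B n) : mul n x y = one n -> inv n x = y.
Proof. intros Hxy; rewrite <- (mul_VK n x y), Hxy, mul_1_r; reflexivity. Qed.

Ltac group_simpl :=
  unfold comm; repeat progress rewrite ?mul_assoc, ?inv_mul, ?inv_inv,
    ?mul_1_l, ?mul_1_r, ?mul_inv_l, ?mul_inv_r, ?mul_K, ?mul_VK, ?inv_one.

Lemma comm_refl n (x : B n) : comm n x x = one n.
Proof. group_simpl; reflexivity. Qed.

Lemma comm_1_l n (x : B n) : comm n (one n) x = one n.
Proof. group_simpl; reflexivity. Qed.

Lemma comm_1_r n (x : B n) : comm n x (one n) = one n.
Proof. group_simpl; reflexivity. Qed.

Fixpoint parity (n : nat) : B n -> bool :=
  match n return B n -> bool with
  | 0 => fun b => b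
  | S m => fun g => match g with (g1, g2, _) => xorb (parity m g1) (parity m g2) end
  end.

Lemma parity_one n : parity n (one n) = false.
Proof. induction n as [|m IH]; simpl; rewrite ?IH; reflexivity. Qed.

Lemma parity_mul n (x y : B n) :
  parity n (mul n x y) = xorb (parity n x) (parity n y).
Proof.
  induction n as [|m IH]; [reflexivity|].
  destruct x as [[x1 x2] []], y as [[y1 y2] q]; simpl; rewrite !IH;
    destruct (parity m x1), (parity m x2), (parity m y1), (parity m y2); reflexivity.
Qed.

Lemma inG_parity n (x : B n) : inG n x <-> parity n x = false.
Proof.
  induction n as [|m IH]; [simpl; tauto|].
  destruct x as [[x1 x2] p]; simpl; rewrite IH, parity_mul; tauto.
Qed.

Lemma inG_mul_same_parity n (x y : B n) :
  parity n x = parity n y -> inG n (mul n x y).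
Proof.
  intros Exy; apply inG_parity; rewrite parity_mul, Exy; destruct (parity n y); reflexivity.
Qed.

Fixpoint leaf_swap (n : nat) : B n :=
  match n return B n with
  | 0 => true
  | S m => (leaf_swap m, one m, false)
  end.

Lemma parity_leaf_swap n : parity n (leaf_swap n) = true.
Proof. induction n as [|m IH]; simpl; rewrite ?IH, ?parity_one; reflexivity. Qed.

Definition parity_rep (n : nat) (b : bool) : B n := if b then leaf_swap n else one n.

Lemma parity_parity_rep n b : parity n (parity_rep n b) = b.
Proof. destruct b; simpl; [apply parity_leaf_swap | apply parity_one]. Qed.

Lemma comm_parity_rep n b c : comm n (parity_rep n b) (parity_rep n c) = one n.
Proof. destruct b, c; simpl; rewrite ?comm_refl, ?comm_1_l, ?comm_1_r; reflexivity. Qed.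

Lemma derived_mul n P (x y : B n) :
  derived n P x -> derived n P y -> derived n P (mul n x y).
Proof.
  intros Hx Hy; induction Hx.
  - rewrite mul_1_l; exact Hy.
  - rewrite mul_assoc; apply der_comm; assumption.
  - rewrite mul_assoc; apply der_invcomm; assumption.
Qed.

Lemma derived_comm n (P : B n -> Prop) a b : P a -> P b -> derived n P (comm n a b).
Proof.
  intros Ha Hb; rewrite <- (mul_1_r n (comm n a b)); apply der_comm; auto; apply der_one.
Qed.

Lemma derived_morph m n (f : B m -> B n) (P : B m -> Prop) (Q : B n -> Prop) :
  f (one m) = one n ->
  (forall x y, f (mul m x y) = mul n (f x) (f y)) ->
  (forall x, P x -> Q (f x)) ->
  forall y, derived m P y -> derived n Q (f y).
Proof.
  intros f_one f_mul PQ.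
  assert (f_inv : forall x, f (inv m x) = inv n (f x)).
  { intros x; symmetry; apply inv_unique; rewrite <- f_mul, mul_inv_r; exact f_one. }
  assert (f_comm : forall a b, f (comm m a b) = comm n (f a) (f b)).
  { intros a b; unfold comm; rewrite !f_mul, !f_inv; reflexivity. }
  intros y Hy; induction Hy; rewrite ?f_one, ?f_mul, ?f_inv, ?f_comm; constructor; auto.
Qed.

Section BaseGroup.

Variable m : nat.

Definition base (x y : B m) : B (S m) := (x, y, false).

Definition swap : B (S m) := (one m, one m, true).

Lemma mul_base x y x' y' :
  mul (S m) (base x y) (base x' y') = base (mul m x x') (mul m y y').
Proof. reflexivity. Qed.

Lemma comm_base x y x' y' :
  comm (S m) (base x y) (base x' y') = base (comm m x x') (comm m y y').
Proof. reflexivity. Qed.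

Lemma comm_base_swap x : comm (S m) (base (one m) x) swap = base x (inv m x).
Proof. unfold comm, base, swap; simpl; group_simpl; reflexivity. Qed.

Lemma derived_base_one y :
  derived m (inG m) y -> derived (S m) (inG (S m)) (base (one m) y).
Proof.
  apply derived_morph; [reflexivity | intros; rewrite mul_base, mul_1_l; reflexivity |].
  intros x Hx; simpl; rewrite mul_1_l; exact Hx.
Qed.

Lemma derived_base_one_comm u v :
  derived (S m) (inG (S m)) (base (one m) (comm m u v)).
Proof.
  set (p := parity_rep m (parity m u)); set (q := parity_rep m (parity m v)).
  replace (one m) with (comm m p q) by apply comm_parity_rep.
  rewrite <- comm_base; apply derived_comm; apply inG_mul_same_parity;
    apply parity_parity_rep.
Qed.

Lemma derived_base_inv x : inG m x -> derived (S m) (inG (S m)) (base x (inv m x)).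
Proof.
  intros Hx; rewrite <- comm_base_swap; apply derived_comm; simpl.
  - rewrite mul_1_l; exact Hx.
  - rewrite mul_1_l; apply inG_parity, parity_one.
Qed.

Lemma derived_base s t h u v :
  inG m s -> derived m (inG m) h -> mul m s t = mul m h (comm m u v) ->
  derived (S m) (inG (S m)) (base s t).
Proof.
  intros Hs Hh Est.
  replace (base s t) with
    (mul (S m) (base s (inv m s))
       (mul (S m) (base (one m) h) (base (one m) (comm m u v)))).
  - apply derived_mul; [apply derived_base_inv; exact Hs|].
    apply derived_mul; [apply derived_base_one; exact Hh | apply derived_base_one_comm].
  - rewrite !mul_base, <- Est; group_simpl; reflexivity.
Qed.

End BaseGroup.

Theorem mainTheorem17 : forall (n : nat) (g : B n),
  inG n g -> derived n (inG n) (mul n g g).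
Proof.
  induction n as [|m IH]; intros g Hg.
  - simpl in Hg; subst g; apply der_one.
  - destruct g as [[g1 g2] []]; simpl in Hg;
      pose (h := mul m (mul m g1 g2) (mul m g1 g2)).
    + change (derived (S m) (inG (S m)) (base m (mul m g1 g2) (mul m g2 g1))).
      apply (derived_base m _ _ h g2 g1 Hg (IH _ Hg)).
      unfold h; group_simpl; reflexivity.
    + change (derived (S m) (inG (S m)) (base m (mul m g1 g1) (mul m g2 g2))).
      apply (derived_base m _ _ h (mul m g1 g2) g2).
      * apply inG_mul_same_parity; reflexivity.
      * exact (IH _ Hg).
      * unfold h; group_simpl; reflexivity.
Qed.
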